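(* Let $p,q\in(0,1/2)$ with $\frac{\log p}{\log q}\notin\mathbb Q$. Then the topological (Kuratowski) limit $\lim_{t\to+\infty}tK_{pq}$ exists and equals $[0,+\infty)$, where $tK_{pq}=\{tx:x\in K_{pq}\}$.
   Context: For $p,q\in(0,1/2)$ let $S_1(x)=px$, $S_2(x)=qx$, $S_3(x)=px+1-p$, $S_4(x)=qx+1-q$, and let $K_{pq}$ be the attractor of $\{S_1,S_2,S_3,S_4\}$, i.e. the unique nonempty compact $K\subset\mathbb R$ with $K=\bigcup_{i=1}^4S_i(K)$. *)

From Stdlib Require Import Reals QArith.
Open Scope R_scope.

Definition S1 (p : R) (x : R) : R := p * x.
Definition S2 (q : R) (x : R) : R := q * x.
Definition S3 (p : R) (x : R) : R := p * x + 1 - p.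
Definition S4 (q : R) (x : R) : R := q * x + 1 - q.

(* K is the attractor of {S1,S2,S3,S4}: a nonempty compact set with
   K = S1(K) u S2(K) u S3(K) u S4(K).  (Such K exists and is unique by
   Hutchinson's theorem.) [compact] is Stdlib's open-cover compactness. *)
Definition is_attractor (p q : R) (K : R -> Prop) : Prop :=
  (exists x, K x) /\ compact K /\
  forall x, K x <->
    exists y, K y /\ (x = S1 p y \/ x = S2 q y \/ x = S3 p y \/ x = S4 q y).

Definition scale_set (t : R) (K : R -> Prop) : R -> Prop :=
  fun x => exists y, K y /\ x = t * y.

Definition Kliminf (A : R -> R -> Prop) : R -> Prop :=
  fun x => forall eps, 0 < eps -> exists T, forall t, T < t ->
    exists y, A t y /\ Rabs (y - x) < eps.

Definition Klimsup (A : R -> R -> Prop) : R -> Prop :=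
  fun x => forall eps, 0 < eps -> forall T, exists t, T < t /\
    exists y, A t y /\ Rabs (y - x) < eps.

Definition Kuratowski_limit_is (A : R -> R -> Prop) (L : R -> Prop) : Prop :=
  (forall x, Kliminf A x <-> L x) /\ (forall x, Klimsup A x <-> L x).

(* Every map S_i sends [c, +oo) into [max(p,q) c, +oo) for c <= 0, so the
   bounded set K lies in [0, +oo); in particular limits of t K lie there.
   Conversely K contains a point z > 0 and with it all p^m q^n z.  On the
   logarithmic scale, t p^m q^n z lands in [ln x, ln x + d) as soon as
   ln t + ln z - ln x lies within d above a point of the additive semigroup
   N(-ln p) + N(-ln q).  That semigroup is eventually d-dense for every d:
   the group Z ln p + Z ln q has arbitrarily small positive elements, since
   otherwise it would have a least positive element and be cyclic, making
   ln p / ln q rational. *)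
From Stdlib Require Import Reals QArith Lra Lia ZArith Classical.
Open Scope R_scope.

Lemma floor_mul (r g : R) : 0 < g -> exists j : Z, IZR j * g <= r < IZR j * g + g.
Proof.
  intros Hg. destruct (base_Int_part (r / g)) as [Hle Hgt].
  exists (Int_part (r / g)).
  assert (Hr : r = r / g * g) by (field; lra).
  split; nra.
Qed.

Lemma floor_mul_nonneg (r g : R) : 0 <= r -> 0 < g ->
  exists j : Z, (0 <= j)%Z /\ IZR j * g <= r < IZR j * g + g.
Proof.
  intros Hr Hg. destruct (floor_mul r g Hg) as [j Hj].
  exists j. split; auto.
  assert (Hj1 : -1 < IZR j) by nra.
  apply lt_IZR in Hj1. lia.
Qed.

Definition zlattice (a b x : R) : Prop := exists k l : Z, x = IZR k * a + IZR l * b.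

Lemma zlattice_l (a b : R) : zlattice a b a.
Proof. exists 1%Z, 0%Z. simpl. ring. Qed.

Lemma zlattice_r (a b : R) : zlattice a b b.
Proof. exists 0%Z, 1%Z. simpl. ring. Qed.

Lemma zlattice_sub (a b x y : R) :
  zlattice a b x -> zlattice a b y -> zlattice a b (x - y).
Proof.
  intros [k [l ->]] [k' [l' ->]]. exists (k - k')%Z, (l - l')%Z.
  rewrite !minus_IZR. ring.
Qed.

Lemma zlattice_zmul (a b x : R) (c : Z) : zlattice a b x -> zlattice a b (IZR c * x).
Proof.
  intros [k [l ->]]. exists (c * k)%Z, (c * l)%Z. rewrite !mult_IZR. ring.
Qed.

Lemma zlattice_least_pos (a b d : R) : 0 < d ->
  (exists x, zlattice a b x /\ 0 < x) ->
  (forall x, zlattice a b x -> 0 < x -> d <= x) ->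
  exists g, zlattice a b g /\ 0 < g /\ forall x, zlattice a b x -> 0 < x -> g <= x.
Proof.
  intros Hd [x0 [Hx0 Hx0p]] Hgap.
  set (E := fun r => exists x, zlattice a b x /\ 0 < x /\ r = - x).
  destruct (completeness E) as [m [Hub Hlub]].
  { exists 0. intros r [x [_ [Hx ->]]]. lra. }
  { exists (- x0), x0. auto. }
  assert (Hinf : forall x, zlattice a b x -> 0 < x -> - m <= x).
  { intros x Hx Hxp. assert (- x <= m) by (apply Hub; exists x; auto). lra. }
  assert (Hnear : exists g, zlattice a b g /\ 0 < g /\ g < - m + d).
  { apply NNPP. intros Hfar. assert (m <= m - d); [|lra].
    apply Hlub. intros r [x [Hx [Hxp ->]]]. apply Rnot_lt_le. intros Hlt.
    apply Hfar. exists x. repeat split; auto. lra. }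
  (* two positive elements less than d apart would give one below d *)
  destruct Hnear as [g [Hg [Hgp Hgm]]].
  exists g. repeat split; auto. intros x Hx Hxp. apply Rnot_lt_le. intros Hlt.
  assert (d <= g - x) by (apply Hgap; [apply zlattice_sub | lra]; auto).
  specialize (Hinf x Hx Hxp). lra.
Qed.

Lemma zlattice_multiple_of_least (a b g x : R) :
  zlattice a b g -> 0 < g -> (forall y, zlattice a b y -> 0 < y -> g <= y) ->
  zlattice a b x -> exists c : Z, x = IZR c * g.
Proof.
  intros Hg Hgp Hleast Hx. destruct (floor_mul x g Hgp) as [c [Hc1 Hc2]].
  exists c. destruct (Req_dec x (IZR c * g)) as [|Hne]; auto. exfalso.
  assert (g <= x - IZR c * g); [|lra].
  apply Hleast; [apply zlattice_sub, zlattice_zmul | lra]; auto.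
Qed.

Lemma zlattice_small_pos (a b d : R) : 0 < a -> 0 < b -> 0 < d ->
  ~ (exists r : Q, a / b = Q2R r) -> exists x, zlattice a b x /\ 0 < x < d.
Proof.
  intros Ha Hb Hd Hirr. apply NNPP. intros Hno.
  destruct (zlattice_least_pos a b d) as [g [Hg [Hgp Hleast]]]; auto.
  { exists a. split; auto using zlattice_l. }
  { intros x Hx Hxp. apply Rnot_lt_le. intros Hxd. apply Hno. exists x. auto. }
  destruct (zlattice_multiple_of_least a b g a) as [ca Ea]; auto using zlattice_l.
  destruct (zlattice_multiple_of_least a b g b) as [cb Eb]; auto using zlattice_r.
  assert (Hcb : (0 < cb)%Z) by (apply lt_IZR; simpl; nra).
  apply Hirr. exists (Qmake ca (Z.to_pos cb)).
  unfold Q2R. simpl. rewrite Z2Pos.id by lia. rewrite Ea, Eb.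
  field. split; try lra; apply not_0_IZR; lia.
Qed.

(* Write s = M h + j g + r' with h = |k| a + |l| b, 0 <= r' < g and, once s is
   large, 0 <= j <= M; then M h + j g has the natural coefficients
   M |k| + j k and M |l| + j l. *)
Lemma zlattice_pos_nat_combs_net (a b g d : R) :
  0 <= a -> 0 <= b -> zlattice a b g -> 0 < g < d ->
  exists S, forall s, S <= s -> exists m n : nat, 0 <= s - INR m * a - INR n * b < d.
Proof.
  intros Ha Hb [k [l Hg]] [Hgp Hgd].
  set (h := IZR (Z.abs k) * a + IZR (Z.abs l) * b).
  assert (Hgh : g <= h).
  { assert (IZR k <= IZR (Z.abs k)) by (apply IZR_le; lia).
    assert (IZR l <= IZR (Z.abs l)) by (apply IZR_le; lia).
    unfold h. nra. }
  set (u := h / g).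
  assert (Hu : h = u * g) by (unfold u; field; lra).
  exists (u * h). intros s Hs.
  destruct (floor_mul_nonneg s h) as [M [HM0 [HM1 HM2]]]; try nra.
  set (r := s - IZR M * h).
  destruct (floor_mul_nonneg r g) as [j [Hj0 [Hj1 Hj2]]]; try (unfold r; lra).
  assert (HjM : (j <= M)%Z).
  { assert (Hrh : r < h) by (unfold r; lra).
    assert (IZR j < u).
    { apply Rmult_lt_reg_r with g; lra. }
    assert (u < IZR M + 1).
    { apply Rmult_lt_reg_r with h; nra. }
    assert (Hlt : IZR j < IZR (M + 1)) by (rewrite plus_IZR; lra).
    apply lt_IZR in Hlt. lia. }
  assert (Hcoef : forall c : Z, (0 <= M * Z.abs c + j * c)%Z).
  { intros c. destruct (Z.abs_spec c) as [[Hc ->] | [Hc ->]]; nia. }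
  exists (Z.to_nat (M * Z.abs k + j * k)), (Z.to_nat (M * Z.abs l + j * l)).
  rewrite !INR_IZR_INZ, !Z2Nat.id by apply Hcoef.
  assert (Hid : s - IZR (M * Z.abs k + j * k) * a - IZR (M * Z.abs l + j * l) * b
                = r - IZR j * g).
  { unfold r, h. rewrite Hg, !plus_IZR, !mult_IZR. ring. }
  rewrite Hid. lra.
Qed.

Lemma irrational_nat_combs_net (a b d : R) : 0 < a -> 0 < b -> 0 < d ->
  ~ (exists r : Q, a / b = Q2R r) ->
  exists S, forall s, S <= s -> exists m n : nat, 0 <= s - INR m * a - INR n * b < d.
Proof.
  intros Ha Hb Hd Hirr.
  destruct (zlattice_small_pos a b d Ha Hb Hd Hirr) as [g [Hg Hgd]].
  apply (zlattice_pos_nat_combs_net a b g); auto; lra.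
Qed.

Lemma pow_products_eventually_hit (p q z x eps : R) :
  0 < p < 1 -> 0 < q < 1 -> ~ (exists r : Q, ln p / ln q = Q2R r) ->
  0 < z -> 0 < x -> 0 < eps ->
  exists T, forall t, T < t -> exists m n : nat, x <= t * (p ^ m * q ^ n * z) < x + eps.
Proof.
  intros Hp Hq Hirr Hz Hx Heps.
  assert (Hlp : ln p < 0) by (rewrite <- ln_1; apply ln_increasing; lra).
  assert (Hlq : ln q < 0) by (rewrite <- ln_1; apply ln_increasing; lra).
  assert (Hirr' : ~ (exists r : Q, - ln p / - ln q = Q2R r)).
  { intros [r Hr]. apply Hirr. exists r. rewrite <- Hr. field. lra. }
  assert (Hd : 0 < ln (x + eps) - ln x).
  { assert (ln x < ln (x + eps)) by (apply ln_increasing; lra). lra. }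
  destruct (irrational_nat_combs_net (- ln p) (- ln q) _ ltac:(lra) ltac:(lra) Hd Hirr')
    as [S HS].
  exists (exp (S + ln x - ln z)). intros t Ht.
  assert (Htp : 0 < t) by (pose proof (exp_pos (S + ln x - ln z)); lra).
  assert (Hlt : S + ln x - ln z < ln t).
  { rewrite <- (ln_exp (S + ln x - ln z)). apply ln_increasing; auto using exp_pos. }
  destruct (HS (ln t + ln z - ln x) ltac:(lra)) as [m [n Hmn]].
  exists m, n.
  assert (Hpm : 0 < p ^ m) by (apply pow_lt; lra).
  assert (Hqn : 0 < q ^ n) by (apply pow_lt; lra).
  set (v := t * (p ^ m * q ^ n * z)).
  assert (Hv : 0 < v) by (unfold v; repeat apply Rmult_lt_0_compat; auto).
  assert (Hlv : ln v = ln t + INR m * ln p + INR n * ln q + ln z).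
  { unfold v. rewrite !ln_mult by (repeat apply Rmult_lt_0_compat; auto).
    rewrite !ln_pow by lra. ring. }
  split.
  - apply Rnot_lt_le. intros Hvx.
    assert (ln v < ln x) by (apply ln_increasing; auto). lra.
  - apply ln_lt_inv; lra.
Qed.

Section Attractor.

Variables (p q : R) (K : R -> Prop).
Hypotheses (Hp : 0 < p < 1) (Hq : 0 < q < 1) (HK : is_attractor p q K).

Lemma attractor_mul_pow (z : R) (m n : nat) : K z -> K (p ^ m * q ^ n * z).
Proof.
  destruct HK as [_ [_ Hfix]]. intros Hz. induction m as [|m IHm].
  - induction n as [|n IHn]; simpl.
    + rewrite !Rmult_1_l. exact Hz.
    + apply Hfix. exists (1 * q ^ n * z). split; auto. right; left. unfold S2. ring.
  - simpl. apply Hfix. exists (p ^ m * q ^ n * z). split; auto. left. unfold S1. ring.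
Qed.

Lemma attractor_lower_bound_contract (c : R) : c <= 0 ->
  (forall y, K y -> c <= y) -> forall y, K y -> Rmax p q * c <= y.
Proof.
  destruct HK as [_ [_ Hfix]]. intros Hc Hlow y Hy.
  apply Hfix in Hy. destruct Hy as [w [Hw Hy]]. specialize (Hlow w Hw).
  pose proof (Rmax_l p q). pose proof (Rmax_r p q).
  unfold S1, S2, S3, S4 in Hy.
  destruct Hy as [-> | [-> | [-> | ->]]]; nra.
Qed.

Lemma attractor_nonneg (y : R) : K y -> 0 <= y.
Proof.
  pose proof HK as [_ [Hcpt _]].
  destruct (compact_P1 K Hcpt) as [m0 [M0 Hb]].
  set (c := Rmin m0 0). set (rho := Rmax p q).
  assert (Hrho : 0 < rho < 1) by (unfold rho; apply Rmax_case; lra).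
  assert (Hpow : forall n y, K y -> rho ^ n * c <= y).
  { induction n as [|n IHn]; simpl; intros z Hz.
    - pose proof (Hb z Hz). pose proof (Rmin_l m0 0). unfold c. lra.
    - rewrite Rmult_assoc. apply attractor_lower_bound_contract; auto.
      pose proof (pow_le rho n ltac:(lra)). pose proof (Rmin_r m0 0). unfold c. nra. }
  intros Hy. apply Rnot_lt_le. intros Hneg.
  assert (Hc : c < 0) by (pose proof (Hpow 0%nat y Hy); simpl in *; lra).
  assert (Hyc : 0 < y / c) by (apply Rdiv_neg_neg; lra).
  destruct (pow_lt_1_zero rho ltac:(rewrite Rabs_right; lra) (y / c) Hyc) as [N HN].
  specialize (HN N (Nat.le_refl N)). rewrite Rabs_right in HN.
  2: { apply Rle_ge, pow_le. lra. }
  assert (Hy' : y = y / c * c) by (field; lra).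
  pose proof (Hpow N y Hy). nra.
Qed.

Lemma attractor_has_pos : exists z, K z /\ 0 < z.
Proof.
  pose proof HK as [[y Hy] [_ Hfix]].
  exists (S3 p y). split.
  - apply Hfix. exists y. auto.
  - pose proof (attractor_nonneg y Hy). unfold S3. nra.
Qed.

Lemma Kliminf_scale_attractor (x : R) :
  ~ (exists r : Q, ln p / ln q = Q2R r) -> 0 <= x ->
  Kliminf (fun t => scale_set t K) x.
Proof.
  intros Hirr Hx eps Heps.
  destruct attractor_has_pos as [z [Hz Hzp]].
  destruct (pow_products_eventually_hit p q z (x + eps / 2) (eps / 2))
    as [T HT]; auto; try lra.
  exists T. intros t Ht. destruct (HT t Ht) as [m [n Hmn]].
  exists (t * (p ^ m * q ^ n * z)). split.
  - exists (p ^ m * q ^ n * z). split; auto using attractor_mul_pow.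
  - apply Rabs_def1; lra.
Qed.

End Attractor.

Lemma Klimsup_scale_nonneg (K : R -> Prop) (x : R) : (forall y, K y -> 0 <= y) ->
  Klimsup (fun t => scale_set t K) x -> 0 <= x.
Proof.
  intros HK Hsup. apply Rnot_lt_le. intros Hx.
  destruct (Hsup (- x) ltac:(lra) 0) as [t [Ht [y [[z [Hz ->]] Habs]]]].
  apply Rabs_def2 in Habs. specialize (HK z Hz). nra.
Qed.

Lemma Kliminf_Klimsup (A : R -> R -> Prop) (x : R) : Kliminf A x -> Klimsup A x.
Proof.
  intros Hinf eps Heps T0. destruct (Hinf eps Heps) as [T HT].
  exists (Rmax T T0 + 1). split.
  - pose proof (Rmax_r T T0). lra.
  - apply HT. pose proof (Rmax_l T T0). lra.
Qed.

Lemma Kuratowski_limit_intro (A : R -> R -> Prop) (L : R -> Prop) :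
  (forall x, L x -> Kliminf A x) -> (forall x, Klimsup A x -> L x) ->
  Kuratowski_limit_is A L.
Proof.
  intros Hinf Hsup. split; intros x; split; auto using Kliminf_Klimsup.
Qed.

Theorem theorem7 (p q : R) (K : R -> Prop) :
  0 < p < 1/2 -> 0 < q < 1/2 ->
  ~ (exists r : Q, ln p / ln q = Q2R r) ->
  is_attractor p q K ->
  Kuratowski_limit_is (fun t => scale_set t K) (fun x => 0 <= x).
Proof.
  intros Hp Hq Hirr HK. apply Kuratowski_limit_intro.
  - intros x Hx. apply (Kliminf_scale_attractor p q); auto; lra.
  - intros x. apply Klimsup_scale_nonneg.
    intros y. apply (attractor_nonneg p q); auto; lra.
Qed.
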